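(* Let $p\ge 2$, $w\in\mathbb{R}$, $z\in\mathbb{R}^{p-1}$, $\lambda_2\ge 0$ and $\lambda_1>0$. Then the optimization problem \[ \min_{\beta^+\in\mathbb{R},\,\beta^-\in\mathbb{R},\,\theta\in\mathbb{R}^{p-1}}\ \frac12\bigl(w-(\beta^+-\beta^-)\bigr)^2+\frac12\|z-\theta\|_2^2+\lambda_1(\beta^++\beta^-)+\lambda_2\|\theta\|_1 \] subject to $\beta^+\ge 0$, $\beta^-\ge 0$, $\|\theta\|_1\le \beta^++\beta^-$, has a unique solution $(\hat\beta^+,\hat\beta^-,\hat\theta)$.
   Context: $\|\cdot\|_1$ and $\|\cdot\|_2$ denote the $\ell_1$ and Euclidean norms on $\mathbb{R}^{p-1}$. The tuning parameters $\lambda_1,\lambda_2$ are nonnegative. *)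

From mathcomp Require Import all_boot all_order all_algebra.
From mathcomp Require Import reals.
Set Implicit Arguments. Unset Strict Implicit. Unset Printing Implicit Defensive.
Import Order.TTheory GRing.Theory Num.Theory.
Local Open Scope ring_scope.

Definition l1norm (R : realType) (n : nat) (v : 'rV[R]_n) : R :=
  \sum_(i < n) `|v ord0 i|.

Definition l2norm (R : realType) (n : nat) (v : 'rV[R]_n) : R :=
  Num.sqrt (\sum_(i < n) (v ord0 i) ^+ 2).

Definition objective (R : realType) (n : nat) (lam1 lam2 w : R) (z : 'rV[R]_n)
  (bp bm : R) (th : 'rV[R]_n) : R :=
  2^-1 * (w - (bp - bm)) ^+ 2 + 2^-1 * (l2norm (z - th)) ^+ 2
  + lam1 * (bp + bm) + lam2 * l1norm th.

Definition feasible (R : realType) (n : nat) (bp bm : R) (th : 'rV[R]_n) : Prop :=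
  0 <= bp /\ 0 <= bm /\ l1norm th <= bp + bm.

From mathcomp Require Import all_boot all_order all_algebra.
From mathcomp Require Import all_classical all_reals all_analysis.
From mathcomp Require Import ring lra.

(* The objective is continuous and dominates [lam1 (b+ + b-)], while feasibility
   bounds every [|theta_i|] by [b+ + b-]; hence minimizing over the feasible points
   with [b+ + b-] below a fixed level is minimizing a continuous function on a compact
   set, and no feasible point above that level can do better.  For uniqueness, the
   feasible set and the l1 terms are convex while the two quadratic terms are
   strictly convex in [(b+ - b-, theta)]: at the midpoint of two minimizers the
   objective drops by 1/8 of their squared distance in these variables.  So two
   minimizers share [b+ - b-] and [theta], and then their equal objective values
   force equal [b+ + b-] because [lam1 > 0]. *)

Set Implicit Arguments.
Unset Strict Implicit.
Unset Printing Implicit Defensive.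
Import Order.TTheory GRing.Theory Num.Theory.
Import numFieldNormedType.Exports.
Local Open Scope classical_set_scope.
Local Open Scope ring_scope.

Section Norms.
Variables (R : realType) (n : nat).
Implicit Types (u v : 'rV[R]_n).

Lemma l1norm_ge0 v : 0 <= l1norm v.
Proof. exact: sumr_ge0. Qed.

Lemma l1norm0 : l1norm (0 : 'rV[R]_n) = 0.
Proof. by rewrite /l1norm big1 // => i _; rewrite mxE normr0. Qed.

Lemma ler_coord_l1norm v i : `|v ord0 i| <= l1norm v.
Proof. by rewrite /l1norm (bigD1 i) //= lerDl sumr_ge0. Qed.

Lemma l1norm_midpoint u v :
  l1norm (2^-1 *: (u + v)) <= 2^-1 * (l1norm u + l1norm v).
Proof.
rewrite /l1norm -big_split mulr_sumr; apply: ler_sum => i _ /=.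
by rewrite !mxE normrM ger0_norm ?invr_ge0 // ler_wpM2l ?invr_ge0 ?ler_normD.
Qed.

Lemma l2norm_sqr v : l2norm v ^+ 2 = \sum_(i < n) v ord0 i ^+ 2.
Proof. by rewrite sqr_sqrtr // sumr_ge0 // => i _; rewrite sqr_ge0. Qed.

Lemma l2norm_sqr_eq0 v : (l2norm v ^+ 2 == 0) = (v == 0).
Proof.
apply/idP/eqP => [|->]; last by rewrite l2norm_sqr big1 // => i _; rewrite mxE expr0n.
rewrite l2norm_sqr psumr_eq0 => [/allP v0|i _]; last exact: sqr_ge0.
by apply/rowP => i; rewrite mxE; apply/eqP; rewrite -sqrf_eq0 (implyP (v0 i _)).
Qed.

Lemma sqr_midpoint (x a b : R) :
  (x - 2^-1 * (a + b)) ^+ 2 = 2^-1 * ((x - a) ^+ 2 + (x - b) ^+ 2) - 4^-1 * (a - b) ^+ 2.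
Proof. by field. Qed.

Lemma l2norm_sqr_midpoint z u v :
  l2norm (z - 2^-1 *: (u + v)) ^+ 2 =
  2^-1 * (l2norm (z - u) ^+ 2 + l2norm (z - v) ^+ 2) - 4^-1 * l2norm (u - v) ^+ 2.
Proof.
rewrite !l2norm_sqr -big_split !mulr_sumr -sumrB; apply: eq_bigr => i _.
by rewrite !mxE sqr_midpoint.
Qed.

Lemma continuous_l1norm : continuous (@l1norm R n).
Proof.
apply: continuous_big => [|i _]; first exact: add_continuous.
by move=> v; apply: continuous_comp; [exact: coord_continuous|exact: norm_continuous].
Qed.

Lemma continuous_l2norm : continuous (@l2norm R n).
Proof.
have sum_sqr : continuous (fun v : 'rV[R]_n => \sum_(i < n) v ord0 i ^+ 2).
  apply: continuous_big => [|i _ v]; first exact: add_continuous.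
  by apply: continuousM; exact: coord_continuous.
by move=> v; apply: continuous_comp; [exact: sum_sqr|exact: sqrt_continuous].
Qed.

End Norms.

Section Projections.
Variables (U V W : topologicalType).

Lemma continuous_fst_fst : continuous (fun x : U * V * W => x.1.1).
Proof. by move=> x; apply: continuous_comp; exact: cvg_fst. Qed.

Lemma continuous_snd_fst : continuous (fun x : U * V * W => x.1.2).
Proof. by move=> x; apply: continuous_comp; [exact: cvg_fst|exact: cvg_snd]. Qed.

End Projections.

Section Feasible.
Variables (R : realType) (n : nat).

Lemma feasible0 : feasible (0 : R) 0 (0 : 'rV[R]_n).
Proof. by rewrite /feasible l1norm0 addr0 lexx. Qed.

Lemma feasible_midpoint a1 b1 t1 a2 b2 t2 :
  feasible a1 b1 t1 -> feasible a2 b2 t2 ->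
  feasible (2^-1 * (a1 + a2)) (2^-1 * (b1 + b2)) (2^-1 *: (t1 + t2) : 'rV[R]_n).
Proof.
move=> [a1_ge0 [b1_ge0 t1_le]] [a2_ge0 [b2_ge0 t2_le]].
have := l1norm_midpoint t1 t2.
rewrite /feasible !mulr_ge0 ?invr_ge0 ?addr_ge0 //; lra.
Qed.

Definition bounded_feasible (B : R) :=
  [set x : R * R * 'rV[R]_n | feasible x.1.1 x.1.2 x.2 /\ x.1.1 + x.1.2 <= B].

Lemma compact_bounded_feasible B : compact (bounded_feasible B).
Proof.
have closed_ge0 (f : R * R * 'rV[R]_n -> R) : continuous f -> closed [set x | 0 <= f x].
  move=> cf; apply: (@preimage_closed _ _ f [set y | 0 <= y]) => [x _|].
    exact: cf.
  exact: closed_ge.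
have c_sum : continuous (fun x : R * R * 'rV[R]_n => x.1.1 + x.1.2).
  by move=> x; apply: cvgD; [exact: continuous_fst_fst|exact: continuous_snd_fst].
have c_l1 : continuous (fun x : R * R * 'rV[R]_n => l1norm x.2).
  by move=> x; apply: continuous_comp; [exact: cvg_snd|exact: continuous_l1norm].
have bounded_closed : closed (bounded_feasible B).
  have -> : bounded_feasible B =
      [set x | 0 <= x.1.1] `&` [set x | 0 <= x.1.2]
      `&` [set x | 0 <= x.1.1 + x.1.2 - l1norm x.2]
      `&` [set x | 0 <= B - (x.1.1 + x.1.2)].
    by apply/seteqP; split=> x; rewrite /bounded_feasible /= /feasible !subr_ge0; tauto.
  apply: closedI; [apply: closedI; [apply: closedI|]|]; apply: closed_ge0.
  - exact: continuous_fst_fst.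
  - exact: continuous_snd_fst.
  - by move=> x; apply: cvgB; [exact: c_sum|exact: c_l1].
  - by move=> x; apply: cvgB; [exact: cvg_cst|exact: c_sum].
apply: (subclosed_compact bounded_closed (compact_setX (compact_setX
  (@segment_compact _ 0 B) (@segment_compact _ 0 B))
  (rV_compact (fun i => @segment_compact _ (- B) B)))).
move=> [[a b] v]; rewrite /bounded_feasible /= => -[[a_ge0 [b_ge0 v_le]] ab_le].
have v_bound i : `|v ord0 i| <= B by apply: le_trans (ler_coord_l1norm v i) _; lra.
rewrite !in_itv /=; split; [split|] => /=.
- by rewrite a_ge0 /=; lra.
- by rewrite b_ge0 /=; lra.
- by move=> i; rewrite in_itv /= -ler_norml.
Qed.

Lemma exists_feasible_minimizer (f : R * R * 'rV[R]_n -> R) (c : R) :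
  0 < c -> continuous f ->
  (forall x, feasible x.1.1 x.1.2 x.2 -> c * (x.1.1 + x.1.2) <= f x) ->
  exists2 s, feasible s.1.1 s.1.2 s.2 &
    forall x, feasible x.1.1 x.1.2 x.2 -> f s <= f x.
Proof.
move=> c_gt0 cf f_ge.
pose B := f (0, 0, 0) / c.
have B_ge0 : 0 <= B.
  apply: divr_ge0; last exact: ltW.
  by have := f_ge (0, 0, 0) feasible0; rewrite /= addr0 mulr0.
have K0 : bounded_feasible B !=set0.
  by exists (0, 0, 0); split; [exact: feasible0|rewrite /= addr0].
have [s /set_mem [fs sB] s_min] :=
  compact_EVT_min K0 (@compact_bounded_feasible B) (continuous_subspaceT cf).
exists s => // x fx.
have [xB|Bx] := lerP (x.1.1 + x.1.2) B; first by apply: s_min; rewrite inE.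
have s_le0 : f s <= f (0, 0, 0).
  by apply: s_min; rewrite inE; split; [exact: feasible0|rewrite /= addr0].
have cB : c * B = f (0, 0, 0) by rewrite /B mulrC divfK ?gt_eqF.
move: Bx; rewrite -(ltr_pM2l c_gt0); have := f_ge x fx; lra.
Qed.

End Feasible.

Section Problem.
Variables (R : realType) (n : nat) (lam1 lam2 w : R) (z : 'rV[R]_n).
Hypothesis lam2_ge0 : 0 <= lam2.

Local Notation obj := (objective lam1 lam2 w z).

Lemma objective_ge bp bm th : lam1 * (bp + bm) <= obj bp bm th.
Proof.
rewrite /objective.
have := sqr_ge0 (w - (bp - bm)); have := sqr_ge0 (l2norm (z - th)).
have := mulr_ge0 lam2_ge0 (l1norm_ge0 th); lra.
Qed.

Lemma continuous_objective :
  continuous (fun x : R * R * 'rV[R]_n => obj x.1.1 x.1.2 x.2).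
Proof.
have csqr (T : topologicalType) (f : T -> R) :
    continuous f -> continuous (fun x => f x ^+ 2).
  by move=> cf x; rewrite /continuous_at expr2; apply: cvgM; exact: cf.
move=> x; rewrite /objective.
apply: cvgD; [apply: cvgD; [apply: cvgD|]|]; apply: cvgMl_tmp.
- apply: (csqr _ (fun x : R * R * 'rV[R]_n => w - (x.1.1 - x.1.2))) => {}x.
  apply: cvgB; first exact: cvg_cst.
  by apply: cvgB; [exact: continuous_fst_fst|exact: continuous_snd_fst].
- apply: (csqr _ (fun x : R * R * 'rV[R]_n => l2norm (z - x.2))) => {}x.
  apply: (@continuous_comp _ _ _ (fun x : R * R * 'rV[R]_n => z - x.2));
    last exact: continuous_l2norm.
  by apply: cvgB; [exact: cvg_cst|exact: cvg_snd].
- by apply: cvgD; [exact: continuous_fst_fst|exact: continuous_snd_fst].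
- by apply: continuous_comp; [exact: cvg_snd|exact: continuous_l1norm].
Qed.

Lemma objective_midpoint a1 b1 t1 a2 b2 t2 :
  obj (2^-1 * (a1 + a2)) (2^-1 * (b1 + b2)) (2^-1 *: (t1 + t2)) <=
  2^-1 * (obj a1 b1 t1 + obj a2 b2 t2)
  - 8^-1 * ((a1 - b1 - (a2 - b2)) ^+ 2 + l2norm (t1 - t2) ^+ 2).
Proof.
rewrite /objective l2norm_sqr_midpoint.
have -> : 2^-1 * (a1 + a2) - 2^-1 * (b1 + b2) = 2^-1 * ((a1 - b1) + (a2 - b2)) by ring.
have -> : lam1 * (2^-1 * (a1 + a2) + 2^-1 * (b1 + b2)) =
  2^-1 * (lam1 * (a1 + b1) + lam1 * (a2 + b2)) by ring.
have := ler_wpM2l lam2_ge0 (l1norm_midpoint t1 t2).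
rewrite sqr_midpoint mulrA (mulrC lam2) -mulrA mulrDr; lra.
Qed.

Lemma feasible_minimizer_unique (lam1_neq0 : lam1 != 0) a1 b1 t1 a2 b2 t2 :
  feasible a1 b1 t1 -> feasible a2 b2 t2 ->
  (forall bp bm th, feasible bp bm th -> obj a1 b1 t1 <= obj bp bm th) ->
  (forall bp bm th, feasible bp bm th -> obj a2 b2 t2 <= obj bp bm th) ->
  (a1, b1, t1) = (a2, b2, t2).
Proof.
move=> f1 f2 min1 min2.
have obj_eq : obj a1 b1 t1 = obj a2 b2 t2.
  by apply/eqP; rewrite eq_le min1 ?min2.
have := min1 _ _ _ (feasible_midpoint f1 f2).
have := objective_midpoint a1 b1 t1 a2 b2 t2.
have := sqr_ge0 (a1 - b1 - (a2 - b2)); have := sqr_ge0 (l2norm (t1 - t2)).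
move=> t_ge0 d_ge0 mid_le min_le.
have /eqP : l2norm (t1 - t2) ^+ 2 = 0 by lra.
rewrite l2norm_sqr_eq0 subr_eq0 => /eqP t12.
have /eqP : (a1 - b1 - (a2 - b2)) ^+ 2 = 0 by lra.
rewrite sqrf_eq0 subr_eq0 => /eqP d12.
move: obj_eq; rewrite /objective d12 t12 => obj_eq.
have /(mulfI lam1_neq0) s12 : lam1 * (a1 + b1) = lam1 * (a2 + b2) by lra.
by congr (_, _, _); lra.
Qed.

End Problem.

Theorem lemma1 (R : realType) (p : nat) (hp : (2 <= p)%N) (w : R)
  (z : 'rV[R]_(p.-1)) (lam1 lam2 : R) (hl2 : 0 <= lam2) (hl1 : 0 < lam1) :
  exists! s : R * R * 'rV[R]_(p.-1),
    feasible s.1.1 s.1.2 s.2 /\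
    forall (bp bm : R) (th : 'rV[R]_(p.-1)), feasible bp bm th ->
      objective lam1 lam2 w z s.1.1 s.1.2 s.2 <= objective lam1 lam2 w z bp bm th.
Proof.
have [[[a b] t] /= f_abt min_abt] := exists_feasible_minimizer hl1
  (@continuous_objective _ _ lam1 lam2 w z) (fun x _ => objective_ge lam1 w z hl2 _ _ _).
have {}min_abt bp bm th : feasible bp bm th ->
    objective lam1 lam2 w z a b t <= objective lam1 lam2 w z bp bm th.
  by move=> f; exact: (min_abt (bp, bm, th)).
exists (a, b, t); split=> // [[[a' b'] t']] /= [f' min'].
by rewrite (feasible_minimizer_unique hl2 (lt0r_neq0 hl1) f_abt f' min_abt min').
Qed.
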